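(* For the log-loss $\ell_{\log}(\mathrm{h},(x,y))=-\log\mathrm{h}(y|x)$ and training instances $x_1,\dots,x_n$, the problem $\mathscr{P}_{x,\ell_{\log}}^{\mathbf{a},\mathbf{b}}$ is equivalent to $$\mathscr{P}_{x,\log}^{\mathbf{a},\mathbf{b}}:\ \min_{\boldsymbol{\mu},\boldsymbol{\eta}}\ \tfrac{1}{2}(\mathbf{b}-\mathbf{a})^{\mathrm{T}}\boldsymbol{\eta}-\tfrac{1}{2}(\mathbf{b}+\mathbf{a})^{\mathrm{T}}\boldsymbol{\mu}-\frac{1}{n}\sum_{i=1}^n\varphi_{\log}(\boldsymbol{\mu},x_i)\ \text{ s.t. }\boldsymbol{\eta}+\boldsymbol{\mu}\succeq\mathbf{0},\ \boldsymbol{\eta}-\boldsymbol{\mu}\succeq\mathbf{0},$$ with $\varphi_{\log}(\boldsymbol{\mu},x)=-\log\sum_{y\in\mathcal{Y}}\exp\{\Phi(x,y)^{\mathrm{T}}\boldsymbol{\mu}\}$. In addition, for a solution $\boldsymbol{\mu}^*,\boldsymbol{\eta}^*$ of $\mathscr{P}_{x,\log}^{\mathbf{a},\mathbf{b}}$, the condition $\ell_{\log}(\mathrm{h},(x,y))+\Phi(x,y)^{\mathrm{T}}\boldsymbol{\mu}^*+\varphi_{\ell_{\log}}(\boldsymbol{\mu}^*,x)\leq0$ for all $x,y$ (which makes $\mathrm{h}$ a log-MRC for $\mathcal{U}_x^{\mathbf{a},\mathbf{b}}$) becomes $$\mathrm{h}(y|x)=\exp\{\Phi(x,y)^{\mathrm{T}}\boldsymbol{\mu}^*+\varphi_{\log}(\boldsymbol{\mu}^*,x)\}=\Big(\sum_{i\in\mathcal{Y}}\exp\{(\Phi(x,i)-\Phi(x,y))^{\mathrm{T}}\boldsymbol{\mu}^*\}\Big)^{-1}\quad\forall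 x,y.$$
   Context: Let $\mathcal{X},\mathcal{Y}$ be finite nonempty sets, $\mathcal{Y}=\{1,\dots,|\mathcal{Y}|\}$; $\Delta(\mathcal{Z})$ the probability distributions on a finite set $\mathcal{Z}$. A classification rule $\mathrm{h}$ assigns to each $x$ a distribution $\mathrm{h}(\cdot|x)\in\Delta(\mathcal{Y})$. For a score function $L$ (loss $\ell(\mathrm{h},(x,y))=L(\mathrm{h}(\cdot|x),y)$): $\Phi:\mathcal{X}\times\mathcal{Y}\to\mathbb{R}^m$ is a feature mapping, $\boldsymbol{\Phi}(x,\cdot)$ the $|\mathcal{Y}|\times m$ matrix with rows $\Phi(x,y)^{\mathrm{T}}$, $\mathbf{1}$ the all-ones vector, $\preceq,\succeq$ componentwise, $\mathcal{L}=\{\mathbf{c}\in\mathbb{R}^{|\mathcal{Y}|}:\exists\,\mathrm{q}\in\Delta(\mathcal{Y}),\ \mathbf{c}+(L(\mathrm{q},y))_{y}\preceq\mathbf{0}\}$, $\varphi_\ell(\boldsymbol{\mu},x)=\max\{\nu:\boldsymbol{\Phi}(x,\cdot)\boldsymbol{\mu}+\nu\mathbf{1}\in\mathcal{L}\}$, and $\mathscr{P}_{x,\ell}^{\mathbf{a},\mathbf{b}}$ is $\min_{\boldsymbol{\mu},\boldsymbol{\eta}}\tfrac12(\mathbf{b}-\mathbf{a})^{\mathrm{T}}\boldsymbol{\eta}-\tfrac12(\mathbf{b}+\mathbf{a})^{\mathrm{T}}\boldsymbol{\mu}-\frac1n\sum_{i=1}^n\varphi_\ell(\boldsymbol{\mu},x_i)$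 s.t. $\boldsymbol{\eta}\pm\boldsymbol{\mu}\succeq\mathbf{0}$. With $\mathrm{p}_n$ the empirical distribution of $x_1,\dots,x_n$, $\mathcal{U}_x^{\mathbf{a},\mathbf{b}}=\{\mathrm{p}\in\Delta(\mathcal{X}\times\mathcal{Y}):\mathbf{a}\preceq\mathbb{E}_{\mathrm{p}}\{\Phi\}\preceq\mathbf{b},\ \sum_y\mathrm{p}(x,y)=\mathrm{p}_n(x)\ \forall x\}$, and an $\ell$-MRC for $\mathcal{U}$ minimizes $\max_{\mathrm{p}\in\mathcal{U}}\sum_{x,y}\mathrm{p}(x,y)\ell(\mathrm{h},(x,y))$ over all classification rules. *)

From HB Require Import structures.
From mathcomp Require Import all_boot all_order all_algebra.
From mathcomp Require Import all_classical all_reals.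
From mathcomp Require Import ereal sequences exp.
Set Implicit Arguments. Unset Strict Implicit. Unset Printing Implicit Defensive.
Import Order.TTheory GRing.Theory Num.Theory.
Local Open Scope ring_scope.

Section MRC.
Variables (R : realType) (X Y : finType) (m : nat).

Definition dotv (u v : 'rV[R]_m) : R := \sum_(j < m) u 0 j * v 0 j.

Definition is_dist (q : Y -> R) : Prop := (forall y, 0 <= q y) /\ \sum_(y : Y) q y = 1.

(* classification rule: h(.|x) \in Delta(Y) for all x ; h x y = h(y|x) *)
Definition is_rule (h : X -> Y -> R) : Prop := forall x, is_dist (h x).

Definition logloss (q : Y -> R) (y : Y) : \bar R :=
  if q y == 0 then +oo%E else (- ln (q y))%:E.

Definition Lset (L : (Y -> R) -> Y -> \bar R) (c : Y -> R) : Prop :=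
  exists q, is_dist q /\ forall y, ((c y)%:E + L q y <= 0)%E.

Definition phi_feas (L : (Y -> R) -> Y -> \bar R) (Phi : X -> Y -> 'rV[R]_m)
  (mu : 'rV[R]_m) (x : X) (nu : R) : Prop :=
  Lset L (fun y => dotv (Phi x y) mu + nu).

Definition is_max (S : R -> Prop) (v : R) : Prop := S v /\ forall w, S w -> w <= v.

Definition is_phi (L : (Y -> R) -> Y -> \bar R) (Phi : X -> Y -> 'rV[R]_m)
  (f : 'rV[R]_m -> X -> R) : Prop :=
  forall mu x, is_max (phi_feas L Phi mu x) (f mu x).

Definition phi_log (Phi : X -> Y -> 'rV[R]_m) (mu : 'rV[R]_m) (x : X) : R :=
  - ln (\sum_(y : Y) expR (dotv (Phi x y) mu)).

Definition objective (n : nat) (xs : 'I_n -> X) (a b : 'rV[R]_m)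
  (phi : 'rV[R]_m -> X -> R) (mu eta : 'rV[R]_m) : R :=
  2^-1 * dotv (b - a) eta - 2^-1 * dotv (b + a) mu
  - n%:R^-1 * \sum_(i < n) phi mu (xs i).

Definition feasible (mu eta : 'rV[R]_m) : Prop :=
  forall j, 0 <= eta 0 j + mu 0 j /\ 0 <= eta 0 j - mu 0 j.

Definition is_solution (n : nat) (xs : 'I_n -> X) (a b : 'rV[R]_m)
  (phi : 'rV[R]_m -> X -> R) (mu eta : 'rV[R]_m) : Prop :=
  feasible mu eta /\
  forall mu' eta', feasible mu' eta' ->
    objective xs a b phi mu eta <= objective xs a b phi mu' eta'.

End MRC.

(* For the log-loss, [c y + L(q, y) <= 0] says exactly [exp (c y) <= q y].
   Summing over y, a vector [c] lies in the set [Lset] iff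
   [\sum_y exp (c y) <= 1], so the largest admissible shift [nu] of
   [Phi(x, .) mu] is minus the log-sum-exp, i.e. [phi_log].  At that shift the
   numbers [exp (c y)] sum to 1, and a distribution dominating them pointwise
   must coincide with them: the log-MRC is the softmax of [Phi(x, .) mu]. *)

From HB Require Import structures.
From mathcomp Require Import all_boot all_order all_algebra.
From mathcomp Require Import all_classical all_reals.
From mathcomp Require Import ereal sequences exp.
From mathcomp Require Import lra.
Set Implicit Arguments. Unset Strict Implicit. Unset Printing Implicit Defensive.
Import Order.TTheory GRing.Theory Num.Theory.
Local Open Scope ring_scope.

Lemma eq_of_ler_sum {R : numDomainType} {I : finType} {F G : I -> R} :
  (forall i, F i <= G i) -> \sum_i F i = \sum_i G i -> F =1 G.
Proof.
move=> leFG eqFG i; apply/eqP; rewrite eq_sym -subr_eq0; apply/eqP.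
apply: (@psumr_eq0P _ _ xpredT (fun i => G i - F i)) => //.
  by move=> j _; rewrite subr_ge0.
by rewrite sumrB eqFG subrr.
Qed.

Lemma is_max_uniq (R : realType) (S : R -> Prop) (v w : R) :
  is_max S v -> is_max S w -> v = w.
Proof. by move=> [Sv maxv] [Sw maxw]; apply/le_anti; rewrite maxv ?maxw. Qed.

Lemma is_phi_uniq (R : realType) (X Y : finType) (m : nat)
    (L : (Y -> R) -> Y -> \bar R) (Phi : X -> Y -> 'rV[R]_m) f g :
  is_phi L Phi f -> is_phi L Phi g -> forall mu x, f mu x = g mu x.
Proof. by move=> phif phig mu x; exact: is_max_uniq (phif mu x) (phig mu x). Qed.

Lemma eq_objective (R : realType) (X : finType) (m n : nat) (xs : 'I_n -> X)
    (a b : 'rV[R]_m) (f g : 'rV[R]_m -> X -> R) :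
  (forall mu x, f mu x = g mu x) ->
  forall mu eta, objective xs a b f mu eta = objective xs a b g mu eta.
Proof.
move=> eqfg mu eta; rewrite /objective; congr (_ - _ * _).
by apply: eq_bigr => i _; rewrite eqfg.
Qed.

Lemma dotvBl (R : realType) (m : nat) (u v w : 'rV[R]_m) :
  dotv (u - v) w = dotv u w - dotv v w.
Proof. by rewrite /dotv -sumrB; apply: eq_bigr => j _; rewrite !mxE mulrBl. Qed.

Section LogLoss.
Variables (R : realType) (Y : finType).
Hypothesis Y_gt0 : (0 < #|Y|)%N.

Lemma logloss_addr_le0 {q : Y -> R} {y : Y} {c : R} : 0 <= q y ->
  (logloss q y + c%:E <= 0)%E <-> expR c <= q y.
Proof.
rewrite /logloss; case: eqP => [-> _|/eqP qy_neq0 qy_ge0].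
  by split => //; rewrite leNgt expR_gt0.
have qy_gt0 : 0 < q y by rewrite lt_def qy_neq0.
rewrite -EFinD lee_fin -[X in _ <-> _ <= X]lnK ?posrE // ler_expR.
by split; lra.
Qed.

Lemma sumr_expR_gt0 (s : Y -> R) : 0 < \sum_y expR (s y).
Proof.
case/card_gt0P: Y_gt0 => y0 _; rewrite (bigD1 y0) //= ltr_pwDl ?expR_gt0 //.
by apply: sumr_ge0 => y _; exact: expR_ge0.
Qed.

Lemma sumr_expRDr (s : Y -> R) (nu : R) :
  \sum_y expR (s y + nu) = expR nu * \sum_y expR (s y).
Proof. by rewrite mulr_sumr; apply: eq_bigr => y _; rewrite expRD mulrC. Qed.

Lemma sumr_expR_logsumexp (s : Y -> R) :
  \sum_y expR (s y - ln (\sum_y expR (s y))) = 1.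
Proof.
have S_gt0 := sumr_expR_gt0 s.
by rewrite sumr_expRDr expRN lnK ?posrE // mulVf ?gt_eqF.
Qed.

Lemma Lset_logloss (c : Y -> R) :
  Lset (@logloss R Y) c <-> \sum_y expR (c y) <= 1.
Proof.
have S_gt0 := sumr_expR_gt0 c; set S := \sum_y _ in S_gt0 *.
split.
  move=> [q [[q_ge0 q_sum1] Lq]]; rewrite -q_sum1; apply: ler_sum => y _.
  by apply: (logloss_addr_le0 (q_ge0 y)).1; rewrite addeC.
move=> S_le1; have q_ge0 y : 0 <= expR (c y) / S by rewrite divr_ge0 ?expR_ge0 ?ltW.
exists (fun y => expR (c y) / S); split.
  by split => //; rewrite -mulr_suml divff ?gt_eqF.
move=> y; rewrite addeC; apply/logloss_addr_le0 => //.
by rewrite ler_pdivlMr // ler_piMr ?expR_ge0.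
Qed.

Lemma Lset_logloss_shift (s : Y -> R) (nu : R) :
  Lset (@logloss R Y) (fun y => s y + nu) <-> nu <= - ln (\sum_y expR (s y)).
Proof.
have S_gt0 := sumr_expR_gt0 s.
rewrite Lset_logloss sumr_expRDr -ler_expR expRN lnK ?posrE //.
by rewrite -[_^-1]div1r ler_pdivlMr.
Qed.

Lemma is_max_logsumexp (s : Y -> R) :
  is_max (fun nu => Lset (@logloss R Y) (fun y => s y + nu))
         (- ln (\sum_y expR (s y))).
Proof. by split=> [|nu]; rewrite Lset_logloss_shift. Qed.

Lemma logloss_le0_eq (q : Y -> R) (c : Y -> R) :
  is_dist q -> \sum_y expR (c y) = 1 ->
  (forall y, (logloss q y + (c y)%:E <= 0)%E) <-> (forall y, q y = expR (c y)).
Proof.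
move=> [q_ge0 q_sum1] c_sum1; split => [Lq y|eq_qc y].
  have le_cq z : expR (c z) <= q z by apply/logloss_addr_le0.
  by rewrite (eq_of_ler_sum le_cq) // c_sum1.
by apply/logloss_addr_le0; rewrite // eq_qc.
Qed.

End LogLoss.

Section PhiLog.
Variables (R : realType) (X Y : finType) (m : nat) (Phi : X -> Y -> 'rV[R]_m).
Hypothesis Y_gt0 : (0 < #|Y|)%N.

Lemma is_phi_logloss : is_phi (@logloss R Y) Phi (phi_log Phi).
Proof. by move=> mu x; exact: is_max_logsumexp. Qed.

Lemma sumr_expR_phi_log (mu : 'rV[R]_m) (x : X) :
  \sum_y expR (dotv (Phi x y) mu + phi_log Phi mu x) = 1.
Proof. exact: sumr_expR_logsumexp. Qed.

Lemma expR_phi_logE (mu : 'rV[R]_m) (x : X) (y : Y) :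
  expR (dotv (Phi x y) mu + phi_log Phi mu x) =
  (\sum_i expR (dotv (Phi x i - Phi x y) mu))^-1.
Proof.
have S_gt0 := sumr_expR_gt0 Y_gt0 (fun i => dotv (Phi x i) mu).
rewrite /phi_log expRD expRN lnK ?posrE //.
rewrite [in RHS](eq_bigr (fun i => expR (dotv (Phi x i) mu) / expR (dotv (Phi x y) mu)));
  last by move=> i _; rewrite dotvBl expRB.
by rewrite -mulr_suml invfM invrK mulrC.
Qed.

End PhiLog.

Theorem corollary8 (R : realType) (X Y : finType) (m n : nat)
  (Phi : X -> Y -> 'rV[R]_m) (a b : 'rV[R]_m) (xs : 'I_n -> X)
  (hX : (0 < #|X|)%N) (hY : (0 < #|Y|)%N) (hn : (0 < n)%N) :
  (* phi_{l_log} = phi_log *)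
  is_phi (@logloss R Y) Phi (phi_log Phi) /\
  (* hence P_{x,l_log} and P_{x,log} have the same objective *)
  (forall f, is_phi (@logloss R Y) Phi f ->
     forall mu eta, objective xs a b f mu eta = objective xs a b (phi_log Phi) mu eta) /\
  (* characterization of the log-MRC condition at a solution *)
  (forall mus etas, is_solution xs a b (phi_log Phi) mus etas ->
   forall f, is_phi (@logloss R Y) Phi f ->
   forall h : X -> Y -> R, is_rule h ->
     ((forall x y,
        (logloss (h x) y + (dotv (Phi x y) mus + f mus x)%:E <= 0)%E) <->
      (forall x y,
        h x y = expR (dotv (Phi x y) mus + phi_log Phi mus x) /\
        h x y = (\sum_(i : Y) expR (dotv (Phi x i - Phi x y) mus))^-1))).
Proof.
have phi_logP := is_phi_logloss Phi hY.
have phi_logE f : is_phi (@logloss R Y) Phi f -> forall mu x, f mu x = phi_log Phi mu x.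
  by move=> phif; exact: is_phi_uniq phif phi_logP.
split=> //; split=> [f /phi_logE fE|]; first exact: eq_objective fE.
(* The characterization holds for every [mus]. *)
move=> mus etas _ f /phi_logE fE h h_rule.
have softmaxP x := logloss_le0_eq (h_rule x) (sumr_expR_phi_log Phi hY mus x).
split=> [mrc x y | softmax x y].
  rewrite ((softmaxP x).1 _ y); first by split=> //; exact: expR_phi_logE.
  by move=> z; rewrite -fE; exact: mrc.
rewrite fE; apply: ((softmaxP x).2 _ y) => z.
exact: (softmax x z).1.
Qed.
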